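(* Let $r \ge 1$ and $s \le r$. For $1 \le j \le r$ and $d \ge 0$, let $e^d_{r,j}$ be the elementary symmetric polynomial of degree $d$ in the $r-1$ variables $x_1,\dots,x_r$ with $x_j$ omitted. Let $A_r^s(x_1,\dots,x_r)$ be the $s \times r$ matrix whose $(d+1, j)$ entry is $e^d_{r,j}$ for $0 \le d \le s-1$, $1 \le j \le r$. For $1 \le i_1 < i_2 < \cdots < i_s \le r$, let $B_{i_1,\dots,i_s}$ be the $s \times s$ submatrix of $A_r^s$ consisting of columns $i_1,\dots,i_s$. Then, as polynomials in $x_1,\dots,x_r$, \[ \det B_{i_1,\dots,i_s}(x_1,\dots,x_r) = \prod_{1 \le \alpha < \beta \le s} (x_{i_\alpha} - x_{i_\beta}). \] *)

From HB Require Import structures.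
From mathcomp Require Import all_boot all_algebra.
From mathcomp Require Import mpoly.
Set Implicit Arguments. Unset Strict Implicit. Unset Printing Implicit Defensive.
Import GRing.Theory.
Local Open Scope ring_scope.

Definition esym_omit (R : comRingType) (r : nat) (d : nat) (j : 'I_r) : {mpoly R[r]} :=
  \sum_(h : {set 'I_r} | (#|h| == d) && (j \notin h)) \prod_(i in h) 'X_i.

Definition Amx (R : comRingType) (r s : nat) : 'M[{mpoly R[r]}]_(s, r) :=
  \matrix_(d < s, j < r) esym_omit R d j.

From HB Require Import structures.
From mathcomp Require Import all_boot all_algebra.
From mathcomp Require Import mpoly.
Import GRing.Theory.
Local Open Scope ring_scope.

(* Splitting the subsets of size d.+1 according to whether they contain x_j
   gives e^{d+1} = e^{d+1}_j + x_j e^d_j, where e^d is [mesym] in all r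
   variables; inverting this recursion expresses e^d_j as
   \sum_k e^{d-k} (-x_j)^k.  Hence A_r^s = L V, where L is the unitriangular
   Toeplitz matrix (e^{d-k})_{d,k} and V is the Vandermonde matrix of the
   points -x_1, ..., -x_r, and det B = det V is the Vandermonde product. *)

Section OmittedElementarySymmetric.

Variables (R : comRingType) (r : nat).

Lemma esym_omit0 (j : 'I_r) : esym_omit R 0 j = 1.
Proof.
rewrite /esym_omit (big_pred1 set0) ?big_set0 // => h.
by rewrite cards_eq0 andb_idr // => /eqP->; rewrite in_set0.
Qed.

Lemma mesymS_omit (j : 'I_r) d :
  mesym r R d.+1 = esym_omit R d.+1 j + 'X_j * esym_omit R d j.
Proof.
rewrite /mesym /esym_omit (bigID (fun h : {set 'I_r} => j \in h)) /= addrC.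
congr (_ + _); rewrite big_distrr /=.
rewrite (reindex_onto (fun h => j |: h) (fun h => h :\ j)); last first.
  by move=> h /andP[_ jh]; rewrite setD1K.
have notin_of_setD1U1 h : (j |: h) :\ j = h -> j \notin h.
  by move=> E; rewrite -E setD11.
apply: eq_big => [h|h /andP[_ /eqP/notin_of_setD1U1 jh]]; last first.
  by rewrite big_setU1.
case jh: (j \in h); last first.
  by rewrite setU11 setU1K ?jh // eqxx !andbT cardsU1 jh add1n eqSS.
by rewrite andbF; apply: contraTF jh => /andP[_ /eqP/notin_of_setD1U1].
Qed.

Lemma esym_omit_expand (j : 'I_r) d :
  esym_omit R d j = \sum_(k < d.+1) mesym r R (d - k) * (- 'X_j) ^+ k.
Proof.
elim: d => [|d IHd]; first by rewrite big_ord1 esym_omit0 mesym0E mulr1.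
rewrite -[LHS](addrK ('X_j * esym_omit R d j)) -mesymS_omit IHd.
rewrite [RHS]big_ord_recl subn0 mulr1 mulr_sumr -sumrN; congr (_ + _).
by apply: eq_bigr => k _; rewrite lift0 subSS exprS mulrCA mulNr mulrN.
Qed.

Definition mesym_toeplitz_mx s : 'M[{mpoly R[r]}]_s :=
  \matrix_(d < s, k < s) (if (k <= d)%N then mesym r R (d - k) else 0).

Lemma det_mesym_toeplitz_mx s : \det (mesym_toeplitz_mx s) = 1.
Proof.
rewrite det_trig; last by apply/is_trig_mxP => d k dk; rewrite mxE leqNgt dk.
by rewrite big1 // => d _; rewrite mxE leqnn subnn mesym0E.
Qed.

Lemma colsub_Amx_factor s (i : 'I_s -> 'I_r) :
  colsub i (Amx R r s) =
  mesym_toeplitz_mx s *m Vandermonde s (\row_(b < s) - 'X_(i b)).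
Proof.
apply/matrixP => d b; rewrite !mxE esym_omit_expand.
rewrite (big_ord_widen s (fun k => mesym r R (d - k) * (- 'X_(i b)) ^+ k)) //.
rewrite big_mkcond; apply: eq_bigr => k _.
by rewrite !mxE ltnS; case: ifP => _; rewrite ?mul0r.
Qed.

End OmittedElementarySymmetric.

Theorem lemma2p2 (R : comRingType) (r s : nat) (hr : (1 <= r)%N) (hs : (s <= r)%N)
    (i : 'I_s -> 'I_r) (hi : forall a b : 'I_s, (a < b)%N -> (i a < i b)%N) :
  \det (colsub i (Amx R r s)) =
  \prod_(a < s) \prod_(b < s | (a < b)%N) ('X_(i a) - 'X_(i b)).
Proof.
rewrite colsub_Amx_factor det_mulmx det_mesym_toeplitz_mx mul1r det_Vandermonde.
by apply: eq_bigr => a _; apply: eq_bigr => b _; rewrite !mxE opprK addrC.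
Qed.
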